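(* Let $G$ be an $(N,k)$ Adinkra obtained from an $N$-cube Adinkra by quotienting by a doubly even $(N,k)$ code $C$ (vertices labeled by cosets $x+C$). Let $\phi$ be a single orbit of the automorphism group of $G$ disregarding vertex coloring, and let $c\in\mathbb{Z}_2^N$. If $\langle x,c\rangle \pmod 2$ takes the same value for all $x\in\mathbb{Z}_2^N$ with $x+C\in\phi$, then $c\in C$.
   Context: An Adinkra of dimension $N$ is a finite connected simple graph $G=(V,E)$ with: a bipartition of $V$ into bosons and fermions (every edge joins a boson and a fermion); a height function $\mathrm{hgt}:V\to\mathbb{Z}$ with adjacent vertices at heights differing by $1$; a coloring of $E$ by colors $\{1,\dots,N\}$ such that each vertex is incident to exactly one edge of each color; an edge parity $\pi:E\to\mathbb{Z}_2$ (parity $1$ = dashed); such that every path with edge colors $(i,j)$, $i\ne j$, lies in a unique 4-cycle with colors $(i,j,i,j)$, each having an odd number of dashed edges. If $|V|=2^{N-k}$, $G$ is an $(N,k)$ Adinkra. Switching a vertex reverses the parity of its incident edges. A doubly even $(N,k)$ code $C$ is a $k$-dimensional subspace of $\mathbb{Z}_2^N$ all of whose elements have weight $\equiv0\pmod4$; $\langle u,v\rangle=\sum_i u_iv_i \bmod 2$. Quotient construction: label the vertices of an $N$-cube Adinkra by $\mathbb{Z}_2^N$ so that color-$i$ edges join $v$ and $v+e_i$, and identify vertices whose labels differ by elements of $C$; the result has vertices $x+C$ with color-$i$ edges joining $x+C$ and $x+e_i+C$. An automorphism disregarding vertex coloring is a permutation of $V$ preserving adjacency and edge colors (ignoring heights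 and bipartition) which becomes parity-preserving after switching some set of vertices. *)

From HB Require Import structures.
From mathcomp Require Import all_boot all_order all_algebra.
Set Implicit Arguments. Unset Strict Implicit. Unset Printing Implicit Defensive.
Import GRing.Theory.
Local Open Scope ring_scope.

Notation word N := 'rV['F_2]_N.

Definition ev (N : nat) (i : 'I_N) : word N := delta_mx 0 i.

Definition wt (N : nat) (v : word N) : nat := #|[set i | v 0 i != 0]|.

Definition doubly_even (N : nat) (C : {vspace word N}) : Prop :=
  forall v, v \in C -> (wt v %% 4 = 0)%N.

Definition dot (N : nat) (u v : word N) : 'F_2 := \sum_(i < N) u 0 i * v 0 i.

(* Vertices of the quotient Adinkra are cosets x + C; a function on vertices
   is represented by a C-invariant function on words. *)
Definition C_invariant (N : nat) (A : Type) (C : {vspace word N}) (g : word N -> A) : Prop :=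
  forall x y, x - y \in C -> g x = g y.

(* Edge parity on the quotient: pi x i is the parity of the colour-i edge
   joining x + C and x + e_i + C.  [quotient_dashing C pi] says pi is a
   well-defined edge parity (independent of coset representative and of the
   endpoint used) satisfying the Adinkra condition: every (i,j,i,j) 4-cycle,
   i <> j, has an odd number of dashed edges. *)
Definition quotient_dashing (N : nat) (C : {vspace word N}) (pi : word N -> 'I_N -> 'F_2) : Prop :=
  [/\ forall i, C_invariant C (fun x => pi x i),
      forall x i, pi (x + ev i) i = pi x i
    & forall x i j, i != j -> pi x i + pi (x + ev i) j + pi (x + ev j) i + pi x j = 1].

(* Automorphism of the quotient Adinkra disregarding vertex colouring,
   represented by a map f on words inducing a well-defined permutation of the
   cosets, preserving colour-i adjacency (x+C -- x+e_i+C is sent to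
   f x + C -- f x + e_i + C), and which becomes parity preserving after
   switching the vertex set {x + C | s x = 1}. *)
Definition is_aut_nc (N : nat) (C : {vspace word N}) (pi : word N -> 'I_N -> 'F_2)
    (f : word N -> word N) : Prop :=
  [/\ forall x y, (x - y \in C) <-> (f x - f y \in C),
      forall y, exists x, f x - y \in C,
      forall x i, f (x + ev i) - (f x + ev i) \in C
    & exists s : word N -> 'F_2, C_invariant C s /\
        forall x i, pi (f x) i = pi x i + s x + s (x + ev i)].

Definition nc_orbit_mem (N : nat) (C : {vspace word N}) (pi : word N -> 'I_N -> 'F_2)
    (x0 x : word N) : Prop :=
  exists f, is_aut_nc C pi f /\ x - f x0 \in C.

(* For [a] orthogonal to [C], the translation [x |-> x + a] is an automorphism
   disregarding vertex colouring.  The parity difference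
   [D y i = pi (y + a) i + pi y i] sums to [0] around every (i,j,i,j) square,
   so summing it along monotone paths of the cube yields a switching function
   [s] with [D y i = s y + s (y + e_i)].  It is constant on cosets of [C]
   because moving the base point of the loop along a codeword [w] by [e_j]
   changes the parity sum of [pi] along [w] by [w_j] (the squares contribute
   [1] each and [wt w] is even), so [s w = <a, w> = 0].  Hence the orbit of
   [x0] contains [x0 + a] for all such [a], forcing [<a, c> = 0], i.e. [c] lies
   in the double orthogonal of [C], which is [C]. *)

From HB Require Import structures.
From mathcomp Require Import all_boot all_order all_algebra ring.
Set Implicit Arguments. Unset Strict Implicit. Unset Printing Implicit Defensive.
Import GRing.Theory VectorInternalTheory.
Local Open Scope ring_scope.

Lemma pchar_F2 : 2%N \in [pchar 'F_2].
Proof. exact: pchar_Fp. Qed.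

Lemma F2_addrr (z : 'F_2) : z + z = 0.
Proof. exact: addrr_pchar2 pchar_F2 z. Qed.

Lemma F2_cases (z : 'F_2) : z = 0 \/ z = 1.
Proof. by case: z => [[|[|//]] ?]; [left | right]; apply/val_inj. Qed.

Lemma F2_add_eq (a b c : 'F_2) : a + b = c -> a = b + c.
Proof. by move<-; rewrite addrCA F2_addrr addr0. Qed.

Lemma F2_telescope (u : nat -> 'F_2) n : \sum_(i < n) (u i.+1 + u i) = u n + u 0%N.
Proof.
rewrite -(big_mkord xpredT (fun i => u i.+1 + u i)).
under eq_bigr => i _ do rewrite -(GRing.subr_pchar2 pchar_F2).
by rewrite telescope_sumr // (GRing.subr_pchar2 pchar_F2).
Qed.

Section PathSums.

Variable N : nat.
Implicit Types (x y z w : word N) (F : word N -> 'I_N -> 'F_2).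

Lemma ev_entry (i j : 'I_N) : ev i 0 j = (i == j)%:R.
Proof. by rewrite /ev mxE eqxx eq_sym. Qed.

Definition pref (i : nat) x : word N := \row_j (if (j < i)%N then x 0 j else 0).

Lemma pref0 x : pref 0 x = 0.
Proof. by apply/rowP => j; rewrite !mxE. Qed.

Lemma pref_full x : pref N x = x.
Proof. by apply/rowP => j; rewrite !mxE ltn_ord. Qed.

Lemma prefD i x y : pref i (x + y) = pref i x + pref i y.
Proof. by apply/rowP => j; rewrite !mxE; case: ifP; rewrite ?addr0. Qed.

Lemma prefS (i : 'I_N) x : pref i.+1 x = pref i x + x 0 i *: ev i.
Proof.
apply/rowP => j; rewrite !mxE eqxx /= ltnS leq_eqVlt.
case: (eqVneq j i) => [->|ne_ji]; first by rewrite eqxx ltnn add0r mulr1.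
by rewrite (_ : (j == i :> nat) = false) ?mulr0 ?addr0 //; exact: negbTE.
Qed.

Lemma pref_ev i (j : 'I_N) : pref i (ev j) = if (j < i)%N then ev j else 0.
Proof.
apply/rowP => k; rewrite mxE ev_entry; case: (eqVneq j k) => [->|ne_jk].
  by case: ifP; rewrite ?ev_entry ?eqxx ?mxE.
by case: ifP; case: ifP; rewrite ?ev_entry ?mxE // (negbTE ne_jk).
Qed.

Definition edge_symmetric F := forall x i, F (x + ev i) i = F x i.

Definition square_sum F x i j := F x i + F (x + ev i) j + F (x + ev j) i + F x j.

(* [path_sum F y x] sums [F] over the monotone path from [y] to [y + x] that
   flips the coordinates of [x] in increasing order. *)
Definition path_sum F y x := \sum_i x 0 i * F (y + pref i x) i.

Lemma path_sum0 F y : path_sum F y 0 = 0.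
Proof. by rewrite /path_sum big1 // => i _; rewrite mxE mul0r. Qed.

Lemma edge_symmetricZ F (b : 'F_2) z j :
  edge_symmetric F -> F (z + b *: ev j) j = F z j.
Proof.
by move=> Fsym; case: (F2_cases b) => ->; rewrite ?scale0r ?addr0 ?scale1r ?Fsym.
Qed.

Lemma square_sum_step F (b : 'F_2) z (i j : 'I_N) :
  b * (F (z + ev j) i + F z i) = F (z + b *: ev i) j + F z j + b * square_sum F z i j.
Proof.
case: (F2_cases b) => ->; first by rewrite !mul0r scale0r !addr0 F2_addrr.
rewrite !mul1r scale1r /square_sum.
transitivity (F (z + ev j) i + F z i + (F (z + ev i) j + F (z + ev i) j) + (F z j + F z j)).
  by rewrite (F2_addrr (F (z + ev i) j)) (F2_addrr (F z j)) !addr0.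
ring.
Qed.

Lemma path_sum_addr_ev F y x (j : 'I_N) : edge_symmetric F ->
  (forall z i j, i != j -> square_sum F z i j = 0) ->
  path_sum F y (x + ev j) = path_sum F y x + F (y + x) j.
Proof.
move=> Fsym Fclosed; apply: F2_add_eq.
pose V k := F (y + pref (maxn k j.+1) x) j.
have term i : (x + ev j) 0 i * F (y + pref i (x + ev j)) i + x 0 i * F (y + pref i x) i
    = V i.+1 + V i + (if i == j then F (y + pref j x) j else 0).
  rewrite mxE ev_entry prefD pref_ev /V -!val_eqE /=.
  case: (ltngtP i j) => [lt_ij|lt_ji|/val_inj eq_ij].
  - rewrite (@maxn_idPr i.+1 j.+1 (ltnW lt_ij)) (@maxn_idPr i j.+1 (leqW (ltnW lt_ij))).
    by rewrite !addr0 !F2_addrr.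
  - rewrite (@maxn_idPl i.+1 j.+1 (ltnW lt_ji)) (@maxn_idPl i j.+1 lt_ji) prefS.
    rewrite !addr0 -mulrDr !addrA square_sum_step Fclosed ?mulr0 ?addr0 //.
    by rewrite neq_ltn lt_ji orbT.
  - rewrite eq_ij maxnn (maxn_idPr (leqnSn j)) !addr0 F2_addrr add0r.
    by rewrite mulrDl mul1r addrAC F2_addrr add0r.
rewrite /path_sum -big_split /= (eq_bigr _ (fun i _ => term i)) big_split /= F2_telescope.
rewrite -big_mkcond big_pred1_eq /V (maxn_idPl (ltn_ord j)) max0n pref_full prefS addrA.
by rewrite edge_symmetricZ // -addrA F2_addrr addr0.
Qed.

Lemma path_sum_addl_ev F (kappa : 'F_2) y x (j : 'I_N) : edge_symmetric F ->
  (forall z i j, i != j -> square_sum F z i j = kappa) ->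
  path_sum F (y + ev j) x
    = path_sum F y x + F (y + x) j + F y j + kappa * \sum_(i | i != j) x 0 i.
Proof.
move=> Fsym Fsq; rewrite -!addrA; apply: F2_add_eq.
pose Q k := F (y + pref k x) j.
have term i : x 0 i * F (y + ev j + pref i x) i + x 0 i * F (y + pref i x) i
    = Q i.+1 + Q i + (if i != j then kappa * x 0 i else 0).
  rewrite -mulrDr addrAC /Q prefS addrA; case: (eqVneq i j) => [->|ne_ij].
    by rewrite /= Fsym edge_symmetricZ // !F2_addrr mulr0.
  by rewrite /= square_sum_step Fsq // mulrC.
rewrite /path_sum -big_split /= (eq_bigr _ (fun i _ => term i)) big_split /= F2_telescope.
by rewrite -big_mkcond -mulr_sumr /Q pref_full pref0 addr0 !addrA.
Qed.

Lemma affine_of_steps (G : word N -> 'F_2) (g : 'I_N -> 'F_2) :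
  (forall y j, G (y + ev j) = G y + g j) ->
  forall y x, G (y + x) = G y + \sum_i x 0 i * g i.
Proof.
move=> Gstep y x; rewrite {1}[x]row_sum_delta; move: y.
apply: (big_rec2 (fun s t => forall y, G (y + s) = G y + t)) => [y|i s t _ IHs y].
  by rewrite !addr0.
rewrite addrCA addrC; case: (F2_cases (x 0 i)) => ->.
  by rewrite scale0r mul0r !add0r addr0 IHs.
by rewrite scale1r mul1r Gstep IHs addrAC addrA.
Qed.

Lemma sum_coord_even w : (2 %| wt w)%N -> \sum_i w 0 i = 0.
Proof.
have -> : \sum_i w 0 i = (wt w)%:R.
  rewrite /wt -sum1_card natr_sum [RHS]big_mkcond /=; apply: eq_bigr => i _.
  by rewrite inE; case: (F2_cases (w 0 i)) => ->.
by case/dvdnP=> m ->; rewrite natrM pchar_Fp_0 ?mulr0.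
Qed.

Lemma path_sum_period F w : edge_symmetric F ->
  (forall z i j, i != j -> square_sum F z i j = 1) ->
  (forall z i, F (z + w) i = F z i) -> \sum_i w 0 i = 0 ->
  forall y a, path_sum F (y + a) w = path_sum F y w + dot a w.
Proof.
move=> Fsym Fsq Fw sum_w; apply: (affine_of_steps (g := fun j => w 0 j)) => y j.
rewrite (path_sum_addl_ev _ _ _ Fsym Fsq) Fw -(addrA (path_sum F y w)) F2_addrr.
rewrite addr0 mul1r.
by move: sum_w; rewrite (bigD1 j) //= => /F2_add_eq; rewrite addr0 => <-.
Qed.

End PathSums.

Lemma dotDl N (x y c : word N) : dot (x + y) c = dot x c + dot y c.
Proof. by rewrite /dot -big_split; apply: eq_bigr => i _; rewrite mxE mulrDl. Qed.

Lemma dot0l N (c : word N) : dot 0 c = 0.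
Proof. by rewrite /dot big1 // => i _; rewrite mxE mul0r. Qed.

(* A column of the cokernel of [C] not killing [c] is a linear form [dot a]
   with [a] orthogonal to [C]. *)
Lemma orth_orth_memv N (C : {vspace word N}) (c : word N) :
  (forall a, (forall w, w \in C -> dot a w = 0) -> dot a c = 0) -> c \in C.
Proof.
move=> c_orth; apply/negPn/negP => c_notin.
pose psi (v : word N) := v2r v *m cokermx (vs2mx C).
have memCE v : (v \in C) = (psi v == 0) by rewrite -submxE -genmxE.
have [j psi_cj] : exists j, psi c 0 j != 0.
  apply/existsP; apply: contraR c_notin; rewrite negb_exists memCE => /forallP psi_c0.
  by apply/eqP/rowP => j; rewrite [RHS]mxE; apply/eqP; move: (psi_c0 j); rewrite negbK.
pose a : word N := \row_i psi (ev i) 0 j.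
have dot_aE v : dot a v = psi v 0 j.
  rewrite {2}(row_sum_delta v) /psi linear_sum mulmx_suml summxE /dot.
  by apply: eq_bigr => i _; rewrite linearZ -scalemxAl [RHS]mxE mxE mulrC.
move: psi_cj; rewrite -dot_aE c_orth ?eqxx // => w.
by rewrite memCE dot_aE => /eqP ->; rewrite mxE.
Qed.

Section Translation.

Variables (N : nat) (C : {vspace word N}) (pi : word N -> 'I_N -> 'F_2) (a : word N).
Hypothesis C_doubly_even : doubly_even C.
Hypothesis pi_inv : forall i, C_invariant C (fun x => pi x i).
Hypothesis pi_sym : edge_symmetric pi.
Hypothesis pi_sq : forall x i j, i != j -> square_sum pi x i j = 1.
Hypothesis a_orth : forall w, w \in C -> dot a w = 0.

Let shift_diff (y : word N) (i : 'I_N) : 'F_2 := pi (y + a) i + pi y i.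

Lemma shift_diff_sym : edge_symmetric shift_diff.
Proof. by move=> y i; rewrite /shift_diff addrAC !pi_sym. Qed.

Lemma shift_diff_closed y i j : i != j -> square_sum shift_diff y i j = 0.
Proof.
move=> ne_ij; rewrite /square_sum /shift_diff ![_ + ev _ + a]addrAC.
transitivity (square_sum pi (y + a) i j + square_sum pi y i j).
  by rewrite /square_sum; ring.
by rewrite !pi_sq // F2_addrr.
Qed.

Lemma shift_diff_invariant w y i : w \in C -> shift_diff (y + w) i = shift_diff y i.
Proof.
move=> wC; rewrite /shift_diff (@pi_inv i (y + w) y) ?(addrC _ (- y)) ?addKr //.
by rewrite (@pi_inv i (y + w + a) (y + a)) // [y + w + a]addrAC addrC addrK.
Qed.

Let switching : word N -> 'F_2 := path_sum shift_diff 0.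

Lemma switching_step x j : switching (x + ev j) = switching x + shift_diff x j.
Proof.
rewrite /switching path_sum_addr_ev ?add0r //; first exact: shift_diff_sym.
exact: shift_diff_closed.
Qed.

Lemma switching_codeword w : w \in C -> switching w = 0.
Proof.
move=> wC; have -> : switching w = path_sum pi a w + path_sum pi 0 w.
  rewrite /switching /path_sum -big_split; apply: eq_bigr => i _.
  by rewrite add0r mulrDr [pref i w + a]addrC.
rewrite -{1}[a]add0r (path_sum_period pi_sym pi_sq _ _ 0 a) ?a_orth ?addr0 ?F2_addrr //.
- by move=> z i; rewrite (@pi_inv i (z + w) z) // addrC addKr.
- apply: sum_coord_even; apply: (@dvdn_trans 4) => //.
  by apply/eqP; exact: C_doubly_even.
Qed.

Lemma switching_invariant : C_invariant C switching.
Proof.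
move=> x y xy_C; have -> : x = y + (x - y) by rewrite addrC subrK.
move: (x - y) xy_C => w wC; pose G z := switching (z + w) + switching z.
have G_step z j : G (z + ev j) = G z + 0.
  by rewrite /G addrAC !switching_step shift_diff_invariant // addrACA F2_addrr.
have := affine_of_steps G_step 0 y; rewrite big1 => [|i _]; last by rewrite mulr0.
rewrite /G !add0r (switching_codeword wC) /switching path_sum0 !addr0 => /F2_add_eq.
by rewrite addr0.
Qed.

Lemma translation_is_aut : is_aut_nc C pi (fun x => x + a).
Proof.
split.
- by move=> x y; rewrite opprD addrACA subrr addr0.
- by move=> y; exists (y - a); rewrite subrK subrr mem0v.
- by move=> x i; rewrite [x + ev i + a]addrAC subrr mem0v.
- exists switching; split; first exact: switching_invariant.
  move=> x i; rewrite switching_step /shift_diff.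
  transitivity (pi (x + a) i + (switching x + switching x) + (pi x i + pi x i)).
    by rewrite !F2_addrr !addr0.
  ring.
Qed.

End Translation.

Theorem mainTheorem6 (N k : nat) (C : {vspace 'rV['F_2]_N})
    (pi : 'rV['F_2]_N -> 'I_N -> 'F_2) (x0 c : 'rV['F_2]_N) (b : 'F_2) :
  \dim C = k ->
  doubly_even C ->
  quotient_dashing C pi ->
  (forall x, nc_orbit_mem C pi x0 x -> dot x c = b) ->
  c \in C.
Proof.
move=> _ C_de [pi_inv pi_sym pi_sq] orbit_dot; apply: orth_orth_memv => a a_orth.
have orbit_shift a' : (forall w, w \in C -> dot a' w = 0) -> nc_orbit_mem C pi x0 (x0 + a').
  move=> a'_orth; exists (fun x => x + a'); split; last by rewrite subrr mem0v.
  exact: translation_is_aut.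
have := orbit_dot _ (orbit_shift a a_orth).
rewrite dotDl -(orbit_dot _ (orbit_shift 0 (fun w _ => dot0l w))) addr0.
by rewrite -{2}[dot x0 c]addr0 => /addrI.
Qed.
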